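(* In the PIR-PSI under a storage constraint problem described in the context, fix $N$, $K$ and the cache size $S$. Among all caching schemes, i.e., all $M$ with $S\le M\le K$ and all $(r_1,\dots,r_M)\in[0,1]^M$ with $\sum_{i=1}^M r_i=S$, the uniform caching scheme with $M=K$ (caching the first $\frac{S}{K}L$ symbols of every message) achieves the lowest optimal normalized download cost.
   Context: Model: $N$ non-communicating databases each store the same $K$ independent messages $W_1,\dots,W_K$ of $L$ symbols each. The user has a cache of $SL$ symbols, $S\in[0,K]$. It accesses a random set $\mathbb{H}$ of $M$ messages ($S\le M\le K$) and caches the first $Lr_i$ symbols of the $i$-th accessed message, $\sum_i r_i=S$. The databases know $M$ and $(r_1,\dots,r_M)$ but not $\mathbb{H}$. The user wants $W_\theta$, sends queries independent of the messages, each database answers with a deterministic function of its query and the messages; the user must decode $W_\theta$ with error entropy $o(L)$, and each database's joint distribution of (query, answer, messages) must not depend on $(\theta,\mathbb{H})$. Download $D=\sum_n H(A_n)$, and $D^*=\inf D/L$ over achievable schemes; for a caching scheme with $r_1\ge\dots\ge r_M$, $D^*=1+\frac1N+\dots+\frac1{N^{K-1-M}}+\sum_{j=1}^{M}\frac{1-r_j}{N^{K-j}}$. *)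

From HB Require Import structures.
From mathcomp Require Import all_boot all_order all_algebra.
Set Implicit Arguments. Unset Strict Implicit. Unset Printing Implicit Defensive.
Import Order.TTheory GRing.Theory Num.Theory.
Local Open Scope ring_scope.

(* Optimal normalized download cost D* of the PIR-PSI problem under a storage
   constraint, for N databases, K messages and a caching scheme given by the
   sequence r = (r_1,...,r_M) of cached fractions (M = size r).  The paper's
   formula assumes r_1 >= ... >= r_M; for an arbitrary r we first sort it in
   nonincreasing order (the cost depends only on the multiset of fractions).        *)
Definition Dstar {R : realFieldType} (N K : nat) (r : seq R) : R :=
  let rs := sort (fun x y : R => y <= x) r in
  \sum_(i < K - size r) (N%:R ^+ i)^-1
  + \sum_(j < size r) (1 - nth 0 rs j) / N%:R ^+ (K - j.+1).

Definition uniform_scheme {R : realFieldType} (K : nat) (S : R) : seq R :=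
  nseq K (S / K%:R).

(* Sorting the cached fractions decreasingly and padding with zeros, the cost
   of any scheme is sum_j w_j (1 - x_j) over the K positions, with weights
   w_j = N^-(K-j-1) nondecreasing in j and fractions x_j nonincreasing in j.
   Chebyshev's sum inequality for such oppositely ordered sequences gives
   sum_j w_j x_j <= (sum_j w_j) (sum_j x_j) / K = (sum_j w_j) S / K, and the
   right-hand side is exactly what the uniform scheme subtracts. *)

From HB Require Import structures.
From mathcomp Require Import all_boot all_order all_algebra.
From mathcomp Require Import zify ring.
Import Order.TTheory GRing.Theory Num.Theory.
Local Open Scope ring_scope.

Section ChebyshevSum.
Context {R : numDomainType}.
Implicit Types w x : nat -> R.

Lemma sum_pairs_mul_diff n w x :
  \sum_(i < n) \sum_(j < n) (w i - w j) * (x i - x j) =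
  (n%:R * \sum_(j < n) w j * x j - (\sum_(j < n) w j) * \sum_(j < n) x j) *+ 2.
Proof.
have expand (i j : 'I_n) : (w i - w j) * (x i - x j) =
    (w i * x i + w j * x j) - (w i * x j + w j * x i) by ring.
under eq_bigr => i _ do rewrite (eq_bigr _ (fun j _ => expand i j)) sumrB
  !big_split /= sumr_const card_ord -mulr_sumr -mulr_suml.
rewrite sumrB !big_split /= sumr_const card_ord sumrMnl -mulr_suml -mulr_sumr.
ring.
Qed.

Lemma chebyshev_sum_le (n : nat) {w x : nat -> R} :
  {homo w : i j / (i <= j)%N >-> i <= j} ->
  {homo x : i j / (i <= j)%N >-> j <= i} ->
  n%:R * \sum_(j < n) w j * x j <= (\sum_(j < n) w j) * \sum_(j < n) x j.
Proof.
move=> w_homo x_homo.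
have opposite i j : (w i - w j) * (x i - x j) <= 0.
  have [ij|/ltnW ji] := leqP i j.
    by rewrite mulr_le0_ge0 ?subr_le0 ?subr_ge0 ?w_homo ?x_homo.
  by rewrite mulr_ge0_le0 ?subr_le0 ?subr_ge0 ?w_homo ?x_homo.
have : \sum_(i < n) \sum_(j < n) (w i - w j) * (x i - x j) <= 0.
  by apply: sumr_le0 => i _; apply: sumr_le0.
by rewrite sum_pairs_mul_diff pmulrn_lle0 // subr_le0.
Qed.

End ChebyshevSum.

Lemma sum_nth_padded (V : nmodType) (s : seq V) (K : nat) :
  (size s <= K)%N -> \sum_(j < K) nth 0 s j = \sum_(v <- s) v.
Proof.
move=> sK; rewrite -(subnKC sK) big_split_ord /= [X in _ + X]big1 ?addr0.
  by rewrite (big_nth 0) big_mkord.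
by move=> j _; rewrite nth_default // leq_addr.
Qed.

Lemma nondecreasing_inv_expr_subn {R : numFieldType} {a : R} (K : nat) :
  1 <= a -> {homo (fun j => (a ^+ (K - j.+1))^-1) : i j / (i <= j)%N >-> i <= j}.
Proof.
move=> a1 i j ij; have a0 : 0 < a by apply: lt_le_trans a1.
rewrite lef_pV2 ?posrE ?exprn_gt0 // ler_weXn2l //; lia.
Qed.

Local Notation sort_ge := (sort (fun x y => y <= x)).

Lemma nth_sort_ge_nonincreasing {R : realDomainType} {s : seq R} :
  all (>= 0) s -> {homo nth 0 (sort_ge s) : i j / (i <= j)%N >-> j <= i}.
Proof.
move=> /allP s_ge0 i j ij.
have [jlt|jge] := ltnP j (size (sort_ge s)); last first.
  rewrite [nth 0 _ j]nth_default //; have [ilt|ige] := ltnP i (size (sort_ge s)).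
    by rewrite s_ge0 // -(mem_sort (fun x y => y <= x)) mem_nth.
  by rewrite nth_default.
have ge_trans : transitive (fun x y : R => y <= x).
  by move=> a b c /= ba cb; apply: le_trans cb ba.
have ge_total : total (fun x y : R => y <= x) by move=> a b; apply: le_total.
apply: (sorted_leq_nth ge_trans (@lexx _ R) 0 (sort_sorted ge_total s)) => //.
by rewrite inE (leq_ltn_trans ij).
Qed.

Lemma Dstar_padded (R : realFieldType) (N K : nat) (r : seq R) :
  (size r <= K)%N ->
  Dstar N K r = \sum_(j < K) (N%:R ^+ (K - j.+1))^-1 *
                  (1 - nth 0 (sort_ge r) j).
Proof.
move=> rK; set x := nth 0 _; pose w j : R := (N%:R ^+ (K - j.+1))^-1.
have x_pad j : (size r <= j)%N -> x j = 0.
  by move=> ?; rewrite /x nth_default // size_sort.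
rewrite /Dstar -(big_mkord xpredT (fun j => w j * (1 - x j))).
rewrite (big_cat_nat (leq0n _) rK) /= big_mkord addrC.
congr (_ + _); last by apply: eq_bigr => j _; rewrite mulrC.
(* The uncached positions M <= j < K give the geometric part of D*, reversed. *)
rewrite (eq_big_nat _ _ (F2 := w)); last first.
  by move=> j /andP[rj _]; rewrite x_pad // subr0 mulr1.
have shift (F : nat -> R) :
    \sum_(size r <= i < K) F i = \sum_(i < K - size r) F (i + size r)%N.
  by rewrite -{1}[size r]add0n big_addn big_mkord.
rewrite big_nat_rev shift.
by apply: eq_bigr => -[j ?] _; rewrite /w /=; congr (_ ^- _); lia.
Qed.

Lemma Dstar_uniform (R : realFieldType) (N K : nat) (S : R) :
  Dstar N K (uniform_scheme K S) =
  \sum_(j < K) (N%:R ^+ (K - j.+1))^-1 * (1 - S / K%:R).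
Proof.
rewrite Dstar_padded ?size_nseq //; apply: eq_bigr => -[j jK] _ /=.
set s := sort _ _; have : s`_j \in s by rewrite mem_nth // size_sort size_nseq.
by rewrite mem_sort mem_nseq => /andP[_ /eqP ->].
Qed.

Theorem corollary3 (R : realFieldType) (N K : nat) (S : R) (M : nat)
    (r : M.-tuple R) :
  (1 <= N)%N ->
  0 <= S -> S <= K%:R ->
  S <= M%:R -> (M <= K)%N ->
  (forall i : 'I_M, 0 <= tnth r i <= 1) ->
  \sum_(i < M) tnth r i = S ->
  Dstar N K (uniform_scheme K S) <= Dstar N K r.
Proof.
move=> N1 _ _ _ MK r01 rS.
have rK : (size r <= K)%N by rewrite size_tuple.
rewrite Dstar_uniform Dstar_padded //.
set x := nth 0 _.
have r_ge0 : all (>= 0) r by apply/allP => _ /tnthP[i ->]; case/andP: (r01 i).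
have sum_x : \sum_(j < K) x j = S.
  rewrite sum_nth_padded ?size_sort // (perm_big _ (permEl (perm_sort _ _))).
  by rewrite -rS big_tuple.
have N1R : 1 <= N%:R :> R by rewrite ler1n.
have := chebyshev_sum_le K (nondecreasing_inv_expr_subn K N1R)
  (nth_sort_ge_nonincreasing r_ge0).
rewrite /= sum_x; have [->|K0] := posnP K; first by rewrite !big_ord0.
rewrite -ler_pdivlMl ?ltr0n // => cheb.
under eq_bigr do rewrite mulrBr mulr1; rewrite sumrB -mulr_suml.
under [X in _ <= X]eq_bigr do rewrite mulrBr mulr1; rewrite sumrB.
by rewrite lerD2l lerN2 mulrA mulrC.
Qed.
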